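(* Let $(R,\mathfrak m)$ be a noetherian local ring, $\nu$ a valuation centered on $R$, and assume $I=\mathrm{Nil}(R)$ is the only associated prime ideal of $R$. Fix $n\ge1$ and take $y_1,\ldots,y_{r+s}\in I^n$ whose images generate $I^n/I^{n+1}$ as an $R_{\rm red}$-module. Let $b\in R\setminus I$ and let $\pi:R\to R^{(1)}$ be the local blowing up with respect to $\nu$ along $(b,y_1,\ldots,y_r)$. Set $y_i^{(1)}=\pi(y_i)/b$ for $1\le i\le r$ and $y^{(1)}_{r+k}=\pi(y_{r+k})$ for $1\le k\le s$. Then, with $I_{(1)}=\mathrm{Nil}(R^{(1)})$, the images of $y_1^{(1)},\ldots,y_{r+s}^{(1)}$ in $I_{(1)}^n/I_{(1)}^{n+1}$ generate this $(R^{(1)})_{\rm red}$-module.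
   Context: All rings are commutative noetherian with $1$; $\mathrm{Nil}(A)$ is the nilradical of $A$ and $A_{\rm red}=A/\mathrm{Nil}(A)$. A valuation on a ring $R$ is a map $\nu:R\to\Gamma\cup\{\infty\}$ ($\Gamma$ an ordered abelian group) with $\nu(ab)=\nu(a)+\nu(b)$, $\nu(a+b)\ge\min\{\nu(a),\nu(b)\}$, $\nu(1)=0$, $\nu(0)=\infty$, whose support $\mathrm{supp}(\nu)=\{a:\nu(a)=\infty\}$ is a minimal prime ideal; it extends to localizations at multiplicative sets disjoint from the support via $\nu(a/s)=\nu(a)-\nu(s)$ and restricts to subrings, implicitly. $\nu$ has a center on $R$ if $\nu\ge0$ on $R$; its center is $\mathfrak C_\nu(R)=\{a:\nu(a)>0\}$. $\nu$ is centered on $(R,\mathfrak m)$ if $\nu\ge0$ on $R$ and $\nu>0$ on $\mathfrak m$. Local blowing up: for $b\in R\setminus\mathrm{supp}(\nu)$ let $J(b)=\bigcup_{i\ge1}\mathrm{ann}_R(b^i)$, so $R/J(b)\subseteq R_b$. Given $a_1,\ldots,a_r\in R$ with $\nu(a_i)\ge\nu(b)$, let $R'=(R/J(b))[a_1/b,\ldots,a_r/b]\subseteq R_b$ and $R^{(1)}=R'_{\mathfrak C_\nu(R')}$; the canonical map $R\to R^{(1)}$ is the local blowing up of $R$ with respect to $\nu$ along $(b,a_1,\ldots,a_r)$. (Here $\mathrm{supp}(\nu)=I$, $J(b)=0$, and $\nu(y_i)=\infty$ since $y_i$ is nilpotent.) *)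

From HB Require Import structures.
From mathcomp Require Import all_boot all_order all_algebra.
Set Implicit Arguments. Unset Strict Implicit. Unset Printing Implicit Defensive.
Import Order.TTheory GRing.Theory Num.Theory.
Local Open Scope ring_scope.

Section Ideals.
Variable R : comPzRingType.

Definition is_ideal (P : R -> Prop) : Prop :=
  [/\ P 0, (forall x y, P x -> P y -> P (x + y)) & (forall a x, P x -> P (a * x))].

Definition is_unit (x : R) : Prop := exists y, x * y = 1.

Definition prime_ideal (P : R -> Prop) : Prop :=
  [/\ is_ideal P, ~ P 1 & forall a b, P (a * b) -> P a \/ P b].

Definition minimal_prime (P : R -> Prop) : Prop :=
  prime_ideal P /\
  forall Q, prime_ideal Q -> (forall x, Q x -> P x) -> forall x, P x -> Q x.

Definition noetherian : Prop :=
  forall I : nat -> R -> Prop, (forall k, is_ideal (I k)) ->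
    (forall k x, I k x -> I k.+1 x) ->
    exists N, forall k x, (N <= k)%N -> I k x -> I N x.

Definition local_ring (m : R -> Prop) : Prop :=
  [/\ is_ideal m, ~ m 1 & forall x, ~ m x -> is_unit x].

Definition nilrad : R -> Prop := fun x => exists k, x ^+ k = 0.

Definition associated_prime (P : R -> Prop) : Prop :=
  prime_ideal P /\ exists x, forall a, P a <-> a * x = 0.

Definition ideal_mul (J K : R -> Prop) : R -> Prop := fun z =>
  exists s : seq (R * R), (forall p, p \in s -> J p.1 /\ K p.2) /\
                          z = \sum_(p <- s) p.1 * p.2.

Fixpoint ideal_pow (J : R -> Prop) (n : nat) : R -> Prop :=
  match n with
  | 0 => fun _ => True
  | n'.+1 => ideal_mul (ideal_pow J n') J
  end.

End Ideals.

(* Ordered abelian groups and valuations; infinity is None *)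
Section Valuations.
Variables (G : zmodType) (le : rel G).

Definition ordered_group : Prop :=
  [/\ (forall x, le x x), (forall x y, le x y -> le y x -> x = y),
      (forall x y z, le x y -> le y z -> le x z),
      (forall x y, le x y \/ le y x) &
      (forall x y z, le x y -> le (x + z) (y + z))].

Definition ole (u v : option G) : Prop :=
  match u, v with
  | _, None => True
  | None, Some _ => False
  | Some a, Some b => le a b
  end.

Definition olt (u v : option G) : Prop := ole u v /\ u <> v.

Definition oadd (u v : option G) : option G :=
  match u, v with
  | Some a, Some b => Some (a + b)
  | _, _ => None
  end.

Definition omuln (u : option G) (k : nat) : option G := iter k (oadd u) (Some 0).

Definition is_valuation (R : comPzRingType) (nu : R -> option G) : Prop :=
  [/\ (forall a b, nu (a * b) = oadd (nu a) (nu b)),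
      (forall a b, ole (nu a) (nu (a + b)) \/ ole (nu b) (nu (a + b))),
      nu 1 = Some 0, nu 0 = None &
      minimal_prime (fun a => nu a = None)].

Definition centered_on (R : comPzRingType) (nu : R -> option G) (m : R -> Prop) : Prop :=
  (forall a, ole (Some 0) (nu a)) /\ (forall a, m a -> olt (Some 0) (nu a)).
End Valuations.

Definition is_localization (A B : comPzRingType) (f : {rmorphism A -> B})
  (Sg : A -> Prop) : Prop :=
  [/\ (forall s, Sg s -> is_unit (f s)),
      (forall z, exists a s, Sg s /\ z * f s = f a) &
      (forall a, f a = 0 -> exists s, Sg s /\ s * a = 0)].

(* f, defined on the subring Rp of A, is a ring map Rp -> B which is a
   localization of Rp at Sg (a multiplicative subset of Rp) *)
Definition is_localization_on (A B : comPzRingType) (Rp : A -> Prop)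
  (f : A -> B) (Sg : A -> Prop) : Prop :=
  [/\ f 1 = 1,
      (forall x y, Rp x -> Rp y -> f (x + y) = f x + f y /\ f (x * y) = f x * f y),
      (forall s, Sg s -> is_unit (f s)),
      (forall z, exists a s, [/\ Rp a, Sg s & z * f s = f a]) &
      (forall a, Rp a -> f a = 0 -> exists s, Sg s /\ s * a = 0)].

Inductive gen_subring (A B : comPzRingType) (f : A -> B) (gens : B -> Prop) : B -> Prop :=
| gs_base a : gen_subring f gens (f a)
| gs_gen x : gens x -> gen_subring f gens x
| gs_add x y : gen_subring f gens x -> gen_subring f gens y -> gen_subring f gens (x + y)
| gs_mul x y : gen_subring f gens x -> gen_subring f gens y -> gen_subring f gens (x * y).

(* Local blowing up of R w.r.t. nu along (b, a_1, ..., a_r):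
   iota : R -> T is R -> R_b (binv = 1/b in T); R' is the subring of T
   generated by iota(R) = R/J(b) and the a_i/b; C is the center of nu on R'
   (nu extended to R_b by nu(c/b^k) = nu(c) - k nu(b)); phi : R' -> S is the
   localization R' -> R'_C = R^(1).  The blowing up map is phi \o iota. *)
Definition local_blowup (G : zmodType) (le : rel G) (R : comPzRingType)
  (nu : R -> option G) (b : R) (r : nat) (a : 'I_r -> R)
  (T : comPzRingType) (iota : {rmorphism R -> T}) (binv : T)
  (S : comPzRingType) (phi : T -> S) : Prop :=
  nu b <> None /\ (forall i, ole le (nu b) (nu (a i))) /\
  is_localization iota (fun x => exists k, x = b ^+ k) /\ iota b * binv = 1 /\
  let Rp := gen_subring iota (fun x => exists i, x = iota (a i) * binv) in
  let C := fun x => exists c k, x * iota b ^+ k = iota c /\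
                                olt le (omuln (nu b) k) (nu c) in
  is_localization_on Rp phi (fun x => Rp x /\ ~ C x).

(* Let f : R -> R^(1) be the blowing up and g_j the elements y_j^(1).  Every element of
   R^(1) is, up to a unit, of the form f(a) + x with x in the ideal generated by the g_j,
   which are nilpotent.  The kernel of f lies in supp(nu), and supp(nu) = Nil(R) because
   supp(nu) is a minimal prime and Nil(R), the unique associated prime, is prime.  Hence a
   nilpotent element of R^(1) is a unit times f(a) + x with a nilpotent: Nil(R^(1)) is
   generated by f(Nil(R)) and the g_j, and by induction Nil(R^(1))^n is generated by
   f(Nil(R)^n) and the g_j.  Finally f(y_j) is a multiple of g_j, so expanding q in
   Nil(R)^n in the y_j modulo Nil(R)^(n+1) expands f(q) in the g_j modulo Nil(R^(1))^(n+1). *)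

From HB Require Import structures.
From mathcomp Require Import all_boot all_order all_algebra.
From mathcomp Require Import ring.
Set Implicit Arguments. Unset Strict Implicit. Unset Printing Implicit Defensive.
Import GRing.Theory.
Local Open Scope ring_scope.

Section IdealFacts.
Variable A : comPzRingType.
Implicit Types (J K P : A -> Prop) (a x z : A).

Lemma idealN P x : is_ideal P -> P x -> P (- x).
Proof. by case=> _ _ PM Px; rewrite -mulN1r; apply: PM. Qed.

Lemma idealB P x z : is_ideal P -> P x -> P z -> P (x - z).
Proof. by move=> hP Px Pz; case: (hP) => _ PD _; apply: PD => //; apply: idealN. Qed.

Lemma ideal_sum P (I : Type) (l : seq I) (Q : pred I) (F : I -> A) :
  is_ideal P -> (forall i, Q i -> P (F i)) -> P (\sum_(i <- l | Q i) F i).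
Proof. by case=> P0 PD _ PF; apply: (big_ind P) => //. Qed.

Lemma prime_idealX P x k : prime_ideal P -> P (x ^+ k) -> P x.
Proof.
case=> _ P1 Pprime; elim: k => [|k IHk]; first by rewrite expr0.
by rewrite exprS => /Pprime[].
Qed.

Lemma nilradD x z : nilrad x -> nilrad z -> nilrad (x + z).
Proof.
case=> i hx [j hz]; exists (i + j)%N; rewrite exprDn big1 // => k _.
have [ltkj|lejk] := ltnP k j.
  by rewrite -addnBA ?(ltnW ltkj) // exprD hx !mul0r mul0rn.
by rewrite -(subnK lejk) exprD hz !mulr0 mul0rn.
Qed.

Lemma nilradMl a x : nilrad x -> nilrad (a * x).
Proof. by case=> k hk; exists k; rewrite exprMn hk mulr0. Qed.

Lemma nilrad_is_ideal : is_ideal (@nilrad A).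
Proof. by split; [exists 1%N; rewrite expr1|exact: nilradD|exact: nilradMl]. Qed.

Lemma ideal_mul_is_ideal J K : is_ideal K -> is_ideal (ideal_mul J K).
Proof.
case=> K0 KD KM; split.
- by exists [::]; rewrite big_nil.
- move=> _ _ [s1 [h1 ->]] [s2 [h2 ->]]; exists (s1 ++ s2); rewrite big_cat.
  by split=> // p; rewrite mem_cat => /orP[/h1|/h2].
- move=> a _ [s1 [h1 ->]]; exists [seq (p.1, a * p.2) | p <- s1]; split.
    by move=> _ /mapP[p /h1[Jp Kp] ->]; split=> //; apply: KM.
  by rewrite big_map mulr_sumr; apply: eq_bigr => p _; rewrite mulrCA.
Qed.

Lemma ideal_pow_is_ideal J k : is_ideal J -> is_ideal (ideal_pow J k).
Proof. by case: k => [|k] hJ; [split|apply: ideal_mul_is_ideal]. Qed.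

Lemma ideal_mul_min J K P x :
  is_ideal P -> (forall a z, J a -> K z -> P (a * z)) -> ideal_mul J K x -> P x.
Proof.
by move=> hP JKP [l [hl ->]]; rewrite big_seq; apply: ideal_sum => // p /hl[]; apply: JKP.
Qed.

Lemma ideal_pow_le J k x : is_ideal J -> (0 < k)%N -> ideal_pow J k x -> J x.
Proof.
case: k => // k hJ _; apply: ideal_mul_min => // a z _ Jz.
by case: hJ => _ _ JM; apply: JM.
Qed.

Lemma ideal_powS_mul J k x z :
  ideal_pow J k x -> J z -> ideal_pow J k.+1 (x * z).
Proof.
move=> Jkx Jz; exists [:: (x, z)]; rewrite big_seq1; split=> // p.
by rewrite inE => /eqP ->.
Qed.

Inductive gen_ideal (S : A -> Prop) : A -> Prop :=
| gen_ideal0 : gen_ideal S 0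
| gen_idealMl a x : S x -> gen_ideal S (a * x)
| gen_idealD x z : gen_ideal S x -> gen_ideal S z -> gen_ideal S (x + z).

Lemma gen_ideal_is_ideal S : is_ideal (gen_ideal S).
Proof.
split; [exact: gen_ideal0|exact: gen_idealD|].
move=> a x; elim=> [|b z Sz|z1 z2 _ IH1 _ IH2].
- by rewrite mulr0; apply: gen_ideal0.
- by rewrite mulrA; apply: gen_idealMl.
- by rewrite mulrDr; apply: gen_idealD.
Qed.

Lemma gen_ideal_min S P x :
  is_ideal P -> (forall z, S z -> P z) -> gen_ideal S x -> P x.
Proof.
case=> P0 PD PM SP; elim=> [|a z /SP|z1 z2 _ P1 _ P2]; [exact: P0|exact: PM|exact: PD].
Qed.

Lemma gen_ideal_mem S x : S x -> gen_ideal S x.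
Proof. by move=> Sx; rewrite -[x]mul1r; apply: gen_idealMl. Qed.

Lemma gen_ideal_mono S S' x :
  (forall z, S z -> S' z) -> gen_ideal S x -> gen_ideal S' x.
Proof.
by move=> SS'; apply: gen_ideal_min => [|z /SS' /gen_ideal_mem]; first exact: gen_ideal_is_ideal.
Qed.

Lemma ideal_mulr_preim P z : is_ideal P -> is_ideal (fun x => P (x * z)).
Proof.
case=> P0 PD PM; split=> [|x1 x2 P1 P2|a x Px];
  rewrite ?mul0r ?mulrDl -?mulrA; [done|exact: PD|exact: PM].
Qed.

Lemma gen_ideal_mul S1 S2 S x z :
  (forall a b, S1 a -> S2 b -> gen_ideal S (a * b)) ->
  gen_ideal S1 x -> gen_ideal S2 z -> gen_ideal S (x * z).
Proof.
move=> S12 gx gz; have hS := gen_ideal_is_ideal S.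
apply: (gen_ideal_min (ideal_mulr_preim z hS)) gx => a S1a.
rewrite mulrC; apply: (gen_ideal_min (ideal_mulr_preim a hS)) gz => b S2b.
by rewrite mulrC; apply: S12.
Qed.

Definition span_mod J (I : finType) (x : I -> A) : A -> Prop :=
  fun z => exists c : I -> A, J (z - \sum_i c i * x i).

Section SpanMod.
Variables (J : A -> Prop) (I : finType) (x : I -> A).
Hypothesis J_ideal : is_ideal J.

Lemma span_mod_is_ideal : is_ideal (span_mod J x).
Proof.
have [J0 JD JM] := J_ideal; split.
- by exists (fun=> 0); rewrite big1 ?subr0 // => i _; rewrite mul0r.
- move=> z1 z2 [c1 h1] [c2 h2]; exists (fun i => c1 i + c2 i).
  rewrite (eq_bigr (fun i => c1 i * x i + c2 i * x i)) => [|i _]; last exact: mulrDl.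
  rewrite big_split /=; have -> : z1 + z2 - (\sum_i c1 i * x i + \sum_i c2 i * x i) =
    (z1 - \sum_i c1 i * x i) + (z2 - \sum_i c2 i * x i) by ring.
  exact: JD.
- move=> a z [c h]; exists (fun i => a * c i).
  have -> : a * z - \sum_i a * c i * x i = a * (z - \sum_i c i * x i).
    by rewrite mulrBr mulr_sumr; congr (_ - _); apply: eq_bigr => i _; rewrite mulrA.
  exact: JM.
Qed.

Lemma span_mod_sub z : J z -> span_mod J x z.
Proof. by exists (fun=> 0); rewrite big1 ?subr0 // => i _; rewrite mul0r. Qed.

Lemma span_mod_gen j : span_mod J x (x j).
Proof.
exists (fun i => (i == j)%:R); rewrite (bigD1 j) //= eqxx mul1r big1 ?addr0.
  by rewrite subrr; case: J_ideal.
by move=> i /negbTE ->; rewrite mul0r.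
Qed.

End SpanMod.
End IdealFacts.

Section IdealRMorphism.
Variables (A B : comPzRingType) (f : {rmorphism A -> B}).

Lemma nilrad_rmorph x : nilrad x -> nilrad (f x).
Proof. by case=> k hk; exists k; rewrite -rmorphXn hk rmorph0. Qed.

Lemma ideal_pow_rmorph (J : A -> Prop) (K : B -> Prop) k x :
  (forall a, J a -> K (f a)) -> ideal_pow J k x -> ideal_pow K k (f x).
Proof.
move=> JK; elim: k x => [//|k IHk] _ [l [hl ->]].
exists [seq (f p.1, f p.2) | p <- l]; split.
  by move=> _ /mapP[p /hl[Jp1 Jp2] ->]; split; [apply: IHk|apply: JK].
by rewrite big_map rmorph_sum; apply: eq_bigr => p _; rewrite rmorphM.
Qed.

End IdealRMorphism.

Section Valuation.
Variables (G : zmodType) (le : rel G) (R : comPzRingType) (nu : R -> option G).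
Hypothesis nu_val : is_valuation le nu.

Lemma omuln_neq_None (u : option G) k : u <> None -> omuln u k <> None.
Proof.
case: u => // g _; elim: k => // k; rewrite /omuln iterS.
by case: (iter _ _ _).
Qed.

Lemma valuation_supp_prime : prime_ideal (fun x => nu x = None).
Proof. by case: nu_val => _ _ _ _ []. Qed.

Lemma valuation_supp_nilrad :
  prime_ideal (@nilrad R) -> forall x, nu x = None -> nilrad x.
Proof.
move=> nil_prime; case: nu_val => _ _ _ nu0 [_ supp_min]; apply: supp_min => //.
by move=> x [k xk0]; apply: (prime_idealX (k := k) valuation_supp_prime); rewrite xk0.
Qed.

End Valuation.

Section NilradicalPowerImage.
Variables (A B : comPzRingType) (f : {rmorphism A -> B}) (I : finType)
  (y : I -> A) (y1 : I -> B) (n : nat).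

Hypothesis n_gt0 : (0 < n)%N.
Hypothesis y_span : forall z, ideal_pow (@nilrad A) n z ->
  span_mod (ideal_pow (@nilrad A) n.+1) y z.
Hypothesis f_ker_nilrad : forall a, f a = 0 -> nilrad a.
Hypothesis y1_nilrad : forall j, nilrad (y1 j).
Hypothesis f_y : forall j, exists u, f (y j) = u * y1 j.
Hypothesis B_cover : forall z, exists a x w,
  [/\ is_unit w, gen_ideal (fun x => exists j, x = y1 j) x & z * w = f a + x].

Lemma nilrad_of_image a : nilrad (f a) -> nilrad a.
Proof.
case=> k /eqP; rewrite -rmorphXn => /eqP /f_ker_nilrad [m akm].
by exists (k * m)%N; rewrite exprM.
Qed.

Definition image_gens k (x : B) : Prop :=
  (exists2 q, ideal_pow (@nilrad A) k q & x = f q) \/ exists j, x = y1 j.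

Lemma nilrad_sub_image_gens z : nilrad z -> gen_ideal (image_gens 1) z.
Proof.
move=> nil_z; have [a [x [w [[v wv] gx zw]]]] := B_cover z.
have nil_x : nilrad x.
  by apply: gen_ideal_min gx => [|_ [j ->]]; [exact: nilrad_is_ideal|exact: y1_nilrad].
have nil_a : nilrad a.
  apply: nilrad_of_image; have -> : f a = z * w - x by rewrite zw addrK.
  by apply: idealB => //; [exact: nilrad_is_ideal|rewrite mulrC; apply: nilradMl].
have -> : z = v * f a + v * x by rewrite -mulrDr -zw mulrCA [v * w]mulrC wv mulr1.
apply: gen_idealD.
  by apply: gen_idealMl; left; exists a => //; rewrite -[a]mul1r; apply: ideal_powS_mul.
have [_ _ gM] := gen_ideal_is_ideal (image_gens 1); apply: gM.
by apply: gen_ideal_mono gx => _ [j ->]; right; exists j.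
Qed.

Lemma image_gens_mul k a b :
  image_gens k a -> image_gens 1 b -> gen_ideal (image_gens k.+1) (a * b).
Proof.
case=> [[q Iq ->]|[j ->]] [[q' Iq' ->]|[j' ->]].
- rewrite -rmorphM; apply: gen_ideal_mem; left; exists (q * q') => //.
  by apply: ideal_powS_mul => //; apply: ideal_pow_le Iq' => //; exact: nilrad_is_ideal.
- by apply: gen_idealMl; right; exists j'.
- by rewrite mulrC; apply: gen_idealMl; right; exists j.
- by rewrite mulrC; apply: gen_idealMl; right; exists j.
Qed.

Lemma nilrad_pow_sub_image_gens k z :
  ideal_pow (@nilrad B) k.+1 z -> gen_ideal (image_gens k.+1) z.
Proof.
elim: k z => [|k IHk] z.
  by move/ideal_pow_le => /(_ (@nilrad_is_ideal B) isT); apply: nilrad_sub_image_gens.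
apply: ideal_mul_min => [|a b /IHk ga /nilrad_sub_image_gens gb]; first exact: gen_ideal_is_ideal.
exact: (gen_ideal_mul (@image_gens_mul k.+1)) ga gb.
Qed.

Lemma image_gens_sub_span_mod z :
  gen_ideal (image_gens n) z -> span_mod (ideal_pow (@nilrad B) n.+1) y1 z.
Proof.
have Jn1 := ideal_pow_is_ideal n.+1 (@nilrad_is_ideal B).
apply: gen_ideal_min => [|_ [[q /y_span[c qc] ->]|[j ->]]]; first exact: span_mod_is_ideal.
  have -> : q = (q - \sum_i c i * y i) + \sum_i c i * y i by rewrite subrK.
  rewrite rmorphD rmorph_sum; have [_ spanD spanM] := span_mod_is_ideal y1 Jn1.
  apply: spanD.
    by apply: span_mod_sub; apply: (ideal_pow_rmorph (@nilrad_rmorph _ _ f)) qc.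
  apply: ideal_sum => [|j _]; first exact: span_mod_is_ideal.
  have [u fyj] := f_y j; rewrite rmorphM fyj mulrA.
  by apply: spanM; apply: span_mod_gen.
exact: span_mod_gen.
Qed.

Lemma nilrad_pow_span_mod z : ideal_pow (@nilrad B) n z ->
  span_mod (ideal_pow (@nilrad B) n.+1) y1 z.
Proof.
rewrite -(prednK n_gt0) => /nilrad_pow_sub_image_gens.
by rewrite prednK //; apply: image_gens_sub_span_mod.
Qed.

End NilradicalPowerImage.

Section LocalBlowup.
Variables (G : zmodType) (le : rel G) (R : comNzRingType) (nu : R -> option G)
  (n r s : nat) (y : 'I_(r + s) -> R) (b : R)
  (T : comPzRingType) (iota : {rmorphism R -> T}) (binv : T)
  (R1 : comPzRingType) (phi : T -> R1).

Local Notation R' :=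
  (gen_subring iota (fun x => exists i, x = iota (y (lshift s i)) * binv)).
Local Notation in_center t := (exists c k,
  t * iota b ^+ k = iota c /\ olt le (omuln (nu b) k) (nu c)).

Hypothesis nu_val : is_valuation le nu.
Hypothesis nilrad_prime : prime_ideal (@nilrad R).
Hypothesis nu_b : nu b <> None.
Hypothesis iota_loc : is_localization iota (fun x => exists k, x = b ^+ k).
Hypothesis b_binv : iota b * binv = 1.
Hypothesis phi1 : phi 1 = 1.
Hypothesis phiDM : forall x x', R' x -> R' x' ->
  phi (x + x') = phi x + phi x' /\ phi (x * x') = phi x * phi x'.
Hypothesis phi_unit : forall t, R' t /\ ~ in_center t -> is_unit (phi t).
Hypothesis phi_surj : forall z, exists a t, [/\ R' a, R' t /\ ~ in_center t & z * phi t = phi a].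
Hypothesis phi_ker : forall a, R' a -> phi a = 0 ->
  exists t, (R' t /\ ~ in_center t) /\ t * a = 0.

Definition blowup_gen (i : 'I_(r + s)) :=
  if (i < r)%N then phi (iota (y i) * binv) else phi (iota (y i)).

Lemma R'_y_binv (j : 'I_(r + s)) : (j < r)%N -> R' (iota (y j) * binv).
Proof.
by move=> ltjr; apply: gs_gen; exists (Ordinal ltjr); congr (iota (y _) * _); apply: val_inj.
Qed.

Lemma R'X w k : R' w -> R' (w ^+ k).
Proof.
move=> R'w; elim: k => [|k IHk]; last by rewrite exprS; apply: gs_mul.
by rewrite expr0 -(rmorph1 iota); apply: gs_base.
Qed.

Lemma phi0 : phi 0 = 0.
Proof.
have := (phiDM (gs_base _ _ 0) (gs_base _ _ 0)).1; rewrite rmorph0 addr0 => phi00.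
by apply: (addIr (phi 0)); rewrite add0r -phi00.
Qed.

Lemma phiX w k : R' w -> phi (w ^+ k) = phi w ^+ k.
Proof.
move=> R'w; elim: k => [|k IHk]; first by rewrite !expr0.
by rewrite !exprS (phiDM R'w (R'X k R'w)).2 IHk.
Qed.

(* phi is only known to be a ring map on R', which contains the image of iota. *)
Definition blowup_map (x : R) : R1 := phi (iota x).

Lemma blowup_mapD x x' : blowup_map (x + x') = blowup_map x + blowup_map x'.
Proof. by rewrite /blowup_map rmorphD (phiDM (gs_base _ _ _) (gs_base _ _ _)).1. Qed.

Lemma blowup_mapM x x' : blowup_map (x * x') = blowup_map x * blowup_map x'.
Proof. by rewrite /blowup_map rmorphM (phiDM (gs_base _ _ _) (gs_base _ _ _)).2. Qed.

Lemma blowup_map_nmod_morphism : nmod_morphism blowup_map.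
Proof. by split; [rewrite /blowup_map rmorph0 phi0|exact: blowup_mapD]. Qed.

HB.instance Definition _ :=
  GRing.isNmodMorphism.Build R R1 blowup_map blowup_map_nmod_morphism.
HB.instance Definition _ := GRing.isMonoidMorphism.Build R R1 blowup_map
  (etrans (congr1 phi (rmorph1 iota)) phi1, blowup_mapM).

Local Notation blowup_gens := (fun x => exists j, x = blowup_gen j).

Lemma phi_R'_decomp w : R' w ->
  exists a x, gen_ideal blowup_gens x /\ phi w = blowup_map a + x.
Proof.
have [_ gD gM] := gen_ideal_is_ideal blowup_gens.
elim=> [a|_ [i ->]|t t' R't [a [x [gx E]]] R't' [a' [x' [gx' E']]]
                 |t t' R't [a [x [gx E]]] R't' [a' [x' [gx' E']]]].
- by exists a, 0; rewrite addr0; split=> //; apply: gen_ideal0.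
- exists 0, (blowup_gen (lshift s i)); rewrite /blowup_map rmorph0 phi0 add0r.
  by split; [apply: gen_ideal_mem; exists (lshift s i)|rewrite /blowup_gen /= ltn_ord].
- exists (a + a'), (x + x'); split; first exact: gD.
  by rewrite (phiDM R't R't').1 blowup_mapD E E'; ring.
- exists (a * a'), (blowup_map a * x' + phi t' * x); split; first by apply: gD; apply: gM.
  by rewrite (phiDM R't R't').2 blowup_mapM E E'; ring.
Qed.

Lemma blowup_cover z : exists a x w,
  [/\ is_unit w, gen_ideal blowup_gens x & z * w = blowup_map a + x].
Proof.
have [t [w [R't [R'w not_center_w] zw]]] := phi_surj z.
have [a [x [gx E]]] := phi_R'_decomp R't.
by exists a, x, (phi w); split=> //; [apply: phi_unit|rewrite zw].
Qed.

(* A t killing iota(a) outside the center is c / b^k with nu(c) finite; then b^i c a = 0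
   in R forces nu(a) to be infinite. *)
Lemma blowup_map_ker a : blowup_map a = 0 -> nilrad a.
Proof.
case/(phi_ker (gs_base _ _ _)) => t [[_ not_center_t] ta0].
have [_ iota_frac iota_ker] := iota_loc.
have [c [_ [[k ->] tbc]]] := iota_frac t.
have supp_prime := valuation_supp_prime nu_val.
have nu_c : nu c <> None.
  move=> nu_c; apply: not_center_t; exists c, k; rewrite -rmorphXn nu_c.
  by split=> //; split; [case: omuln|exact: omuln_neq_None].
have [_ [[i ->] bca0]] : exists s', (exists i, s' = b ^+ i) /\ s' * (c * a) = 0.
  by apply: iota_ker; rewrite rmorphM -tbc mulrAC ta0 mul0r.
have [_ _ _ nu0 _] := nu_val; have [_ _ nu_prime] := supp_prime.
have /nu_prime[/(prime_idealX supp_prime)//|/nu_prime[//|]] : nu (b ^+ i * (c * a)) = None.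
  by rewrite bca0.
exact: (valuation_supp_nilrad nu_val nilrad_prime).
Qed.

Lemma blowup_map_y j : exists u, blowup_map (y j) = u * blowup_gen j.
Proof.
rewrite /blowup_gen; case: ifP => [ltjr|_]; last by exists 1; rewrite mul1r.
exists (blowup_map b); rewrite /blowup_map -(phiDM (gs_base _ _ _) (R'_y_binv ltjr)).2.
by rewrite mulrCA b_binv mulr1.
Qed.

Lemma blowup_gen_nilrad j : nilrad (y j) -> nilrad (blowup_gen j).
Proof.
rewrite /blowup_gen; case: ifP => [ltjr|_] [k yk0]; exists k.
  rewrite -phiX; last exact: R'_y_binv.
  by rewrite exprMn -rmorphXn yk0 rmorph0 mul0r phi0.
rewrite -phiX; last exact: gs_base.
by rewrite -rmorphXn yk0 rmorph0 phi0.
Qed.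

Lemma blowup_nilrad_pow_span_mod :
  (0 < n)%N ->
  (forall z, ideal_pow (@nilrad R) n z -> span_mod (ideal_pow (@nilrad R) n.+1) y z) ->
  (forall j, nilrad (y j)) ->
  forall z, ideal_pow (@nilrad R1) n z ->
    span_mod (ideal_pow (@nilrad R1) n.+1) blowup_gen z.
Proof.
move=> n_gt0 y_span y_nilrad.
apply: (nilrad_pow_span_mod (f := blowup_map) n_gt0 y_span).
- exact: blowup_map_ker.
- by move=> j; apply: blowup_gen_nilrad.
- exact: blowup_map_y.
- exact: blowup_cover.
Qed.

End LocalBlowup.

Theorem mainTheorem16 (R : comNzRingType) (m : R -> Prop)
  (G : zmodType) (le : rel G) (nu : R -> option G)
  (n r s : nat) (y : 'I_(r + s) -> R) (b : R)
  (T : comPzRingType) (iota : {rmorphism R -> T}) (binv : T)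
  (R1 : comPzRingType) (phi : T -> R1) :
  noetherian R -> local_ring m ->
  ordered_group le -> is_valuation le nu -> centered_on le nu m ->
  (forall P : R -> Prop, associated_prime P <-> (forall x, P x <-> nilrad x)) ->
  (1 <= n)%N ->
  (forall i, ideal_pow (@nilrad R) n (y i)) ->
  (forall z, ideal_pow (@nilrad R) n z ->
     exists c : 'I_(r + s) -> R,
       ideal_pow (@nilrad R) n.+1 (z - \sum_i c i * y i)) ->
  ~ nilrad b ->
  local_blowup le nu b (fun i : 'I_r => y (lshift s i)) iota binv phi ->
  let y1 := fun i : 'I_(r + s) =>
    if (i < r)%N then phi (iota (y i) * binv) else phi (iota (y i)) in
  forall z, ideal_pow (@nilrad R1) n z ->
    exists c : 'I_(r + s) -> R1,
      ideal_pow (@nilrad R1) n.+1 (z - \sum_i c i * y1 i).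
Proof.
move=> _ _ _ nu_val _ nilrad_assoc n_gt0 y_In y_span _ [nu_b [_ [iota_loc [b_binv]]]].
case=> phi1 phiDM phi_unit phi_surj phi_ker y1.
have [nilrad_prime _] := (nilrad_assoc _).2 (fun x => conj id id).
have y_nilrad j : nilrad (y j) by apply: ideal_pow_le (y_In j) => //; apply: nilrad_is_ideal.
exact: (blowup_nilrad_pow_span_mod nu_val nilrad_prime nu_b iota_loc b_binv phi1
  phiDM phi_unit phi_surj phi_ker n_gt0 y_span y_nilrad).
Qed.
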